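(* Let $\mathcal{L}\subset\mathcal{L}_*$ be lineages with hierarchical generators $\mathcal{H},\mathcal{H}_*$. Then (i) for every $\varphi\in\mathcal{H}_*$ there exists $k\ge\mathrm{gap}_{\mathcal{H}_*}(\varphi)$ with $\mathcal{O}(\varphi,-k,\mathcal{H})\neq\emptyset$; (ii) for every $\varphi\in\mathcal{H}_*\cap\mathcal{H}$, $\mathrm{gap}_{\mathcal{H}_*}(\varphi)\le\mathrm{gap}_{\mathcal{H}}(\varphi)$.
   Context: Fix integers $d\ge1$, $n\ge2$, $m\ge2$; $s=n-1$, $p=m-1$. B-splines $\varphi^\ell_{\vec i}(\vec x)=\prod_kQ(n^\ell x_k-i_k)$ for $\ell\ge0$, $\vec i\in\mathbb{Z}^d$, $Q$ the uniform B-spline of order $m$ with knots $0,\dots,m$; $\mathfrak{B}$ the set of all of them; $\mathcal{B}^0=\{\varphi^0_{\vec i}:\vec i\in[-p:0]^d\}$. Children $\mathrm{ch}(\varphi^\ell_{\vec i})=\{\varphi^{\ell+1}_{\vec k}:n\vec i\le\vec k\le n\vec i+sm\}$, extended to sets by union. Cells $I^\ell_{\vec i}=\prod_k[i_kn^{-\ell},(i_k+1)n^{-\ell})$, cell children $\mathrm{ch}(I^\ell_{\vec i})=\{I^{\ell+1}_{\vec k}:n\vec i\le\vec k\le n\vec i+s\}$, $\mathrm{ch}^k$ iterated, $\mathrm{ch}^{-k}(I)=\{J:I\in\mathrm{ch}^k(J)\}$. $\mathbb{I}(\varphi^\ell_{\vec i})=\{I^\ell_{\vec k}:\vec i\le\vec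 k\le\vec i+p\}$, $\mathbb{I}^k(\varphi)=\mathrm{ch}^k(\mathbb{I}(\varphi))$ ($k\in\mathbb{Z}$), $\mathbb{B}^k(I)=\{\varphi\in\mathfrak{B}:I\in\mathbb{I}^{-k}(\varphi)\}$, extended to sets by union; $\mathcal{O}(\varphi,j,\mathcal{H})=\mathbb{B}^j(\mathbb{I}(\varphi))\cap\mathcal{H}$. A lineage is a finite $\mathcal{L}\subset\mathfrak{B}$ with $\mathcal{L}\subset\mathcal{B}^0\cup\mathrm{ch}(\mathcal{L})$; its hierarchical generator is $(\mathcal{B}^0\cup\mathrm{ch}(\mathcal{L}))\setminus\mathcal{L}$. For $\varphi\in\mathcal{H}$, $\mathrm{gap}_{\mathcal{H}}(\varphi)=\sup\{g\in\mathbb{Z}:\mathcal{O}(\varphi,-g,\mathcal{H})\neq\emptyset\}$. *)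

From HB Require Import structures.
From mathcomp Require Import all_boot all_order all_algebra.
Set Implicit Arguments. Unset Strict Implicit. Unset Printing Implicit Defensive.
Import Order.TTheory GRing.Theory Num.Theory.
Local Open Scope ring_scope.

(* A B-spline phi^l_i is represented by its (level, translation) pair (l, i),
   l : nat, i in Z^d.  Likewise a cell I^l_i is represented by (l, i).
   Both maps (l,i) |-> function / set are injective. *)
Definition idx (d : nat) := {ffun 'I_d -> int}.
Definition bspl (d : nat) := (nat * idx d)%type.
Definition cell (d : nat) := (nat * idx d)%type.

Definition bset (d : nat) := bspl d -> Prop.
Definition cset (d : nat) := cell d -> Prop.

Section Defs.
Variables (d n m : nat).
Definition s_ : int := (n.-1)%:Z.
Definition p_ : int := (m.-1)%:Z.

Definition B0 (phi : bspl d) : Prop :=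
  phi.1 = 0%N /\ forall t : 'I_d, - p_ <= phi.2 t /\ phi.2 t <= 0.

Definition bchild (phi psi : bspl d) : Prop :=
  psi.1 = phi.1.+1 /\
  forall t : 'I_d, n%:Z * phi.2 t <= psi.2 t /\
                   psi.2 t <= n%:Z * phi.2 t + s_ * m%:Z.

Definition chS (L : bset d) : bset d := fun psi => exists2 phi, L phi & bchild phi psi.

Definition finite_bset (L : bset d) : Prop :=
  exists l : seq (bspl d), forall phi, L phi -> phi \in l.

Definition lineage (L : bset d) : Prop :=
  finite_bset L /\ forall phi, L phi -> B0 phi \/ chS L phi.

Definition hgen (L : bset d) : bset d :=
  fun phi => (B0 phi \/ chS L phi) /\ ~ L phi.

Definition cchild (I J : cell d) : Prop :=
  J.1 = I.1.+1 /\
  forall t : 'I_d, n%:Z * I.2 t <= J.2 t /\ J.2 t <= n%:Z * I.2 t + s_.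

Fixpoint cdesc (k : nat) (J I : cell d) : Prop :=
  match k with
  | 0%N => I = J
  | k'.+1 => exists2 K, cchild J K & cdesc k' K I
  end.

Definition cellsOf (phi : bspl d) (I : cell d) : Prop :=
  I.1 = phi.1 /\ forall t : 'I_d, phi.2 t <= I.2 t /\ I.2 t <= phi.2 t + p_.

(* II^k(phi) = ch^k(II(phi)), k in Z; for k < 0, ch^k(S) = {J : S meets ch^{-k}(J)} *)
Definition cellsK (k : int) (phi : bspl d) (I : cell d) : Prop :=
  match k with
  | Posz k' => exists2 J, cellsOf phi J & cdesc k' J I
  | Negz k' => exists2 J, cellsOf phi J & cdesc k'.+1 I J
  end.

(* BB^k(I) = {phi : I in II^{-k}(phi)}, extended to sets by union;
   O(phi, j, H) = BB^j(II(phi)) \cap H *)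
Definition Ov (phi : bspl d) (j : int) (H : bset d) (psi : bspl d) : Prop :=
  H psi /\ exists2 I, cellsOf phi I & cellsK (- j) psi I.

Definition Onempty (phi : bspl d) (j : int) (H : bset d) : Prop :=
  exists psi, Ov phi j H psi.

(* is_gap H phi g : g = sup { g : O(phi,-g,H) <> empty }, the sup being attained
   (a sup of a set of integers which is a finite integer is a maximum). *)
Definition is_gap (H : bset d) (phi : bspl d) (g : int) : Prop :=
  Onempty phi (- g) H /\ forall g', Onempty phi (- g') H -> g' <= g.
End Defs.

(* Every psi in the generator H_* that is not in H is outside L, so, following
   parents inside L_*, psi has an ancestor chi of some level difference j that
   lies in B^0 u ch(L) but not in L, i.e. chi is in H.  Each cell of psi is a
   j-fold cell descendant of a cell of chi, so an overlap of phi with psi at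
   depth -g becomes an overlap with chi at depth -(g + j); this gives (i), and
   (ii) follows by maximality of gap_H(phi).  The gaps exist because overlaps at
   depth -g force g <= level(phi), while phi overlaps itself at depth 0. *)
From HB Require Import structures.
From mathcomp Require Import all_boot all_order all_algebra.
From mathcomp Require Import zify.
From Stdlib Require Import Classical.
Import Order.TTheory GRing.Theory Num.Theory.
Local Open Scope ring_scope.
Set Implicit Arguments. Unset Strict Implicit.

Lemma int_max_exists (P : int -> Prop) (g0 b : int) :
  P g0 -> (forall g, P g -> g <= b) ->
  exists g, P g /\ forall g', P g' -> g' <= g.
Proof.
move=> Pg0 Pb; have [N eN] : exists N : nat, b = g0 + N%:Z.
  by have := Pb _ Pg0; exists `|b - g0|%N; lia.
rewrite {}eN in Pb; elim: N g0 Pg0 Pb => [|N IHN] g0 Pg0 Pb.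
  by exists g0; split => // g /Pb; rewrite addr0.
have [[g1 [Pg1 lt_g0g1]] | no_larger] := classic (exists g, P g /\ g0 < g).
  by apply: (IHN g1 Pg1) => g /Pb; lia.
exists g0; split => // g Pg; rewrite leNgt; apply/negP => lt_g0g.
by apply: no_larger; exists g.
Qed.

Section Overlaps.
Variables (d n m : nat).

Lemma cdesc_trans x y (A B C : cell d) :
  cdesc n x A B -> cdesc n y B C -> cdesc n (x + y) A C.
Proof.
elim: x A => [|x IHx] A /=; first by move=> ->.
by case=> K AK KB BC; exists K => //; apply: IHx BC.
Qed.

Lemma cdesc_split x y (A C : cell d) :
  cdesc n (x + y) A C -> exists2 B, cdesc n x A B & cdesc n y B C.
Proof.
elim: x A => [|x IHx] A /=; first by exists A.
by case=> K AK /IHx [B KB BC]; exists B => //; exists K.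
Qed.

Lemma cdesc_level k (A C : cell d) : cdesc n k A C -> C.1 = (A.1 + k)%N.
Proof.
elim: k A => [|k IHk] A /=; first by move=> ->; rewrite addn0.
by case=> K [eK _] /IHk ->; rewrite eK addSnnS.
Qed.

Lemma cellsK_level (g : int) (psi : bspl d) (I : cell d) :
  cellsK n m g psi I -> (I.1)%:Z = (psi.1)%:Z + g.
Proof.
case: g => [a|a] [J [eJ _] /cdesc_level eI].
- by rewrite eI eJ; lia.
- by rewrite -eJ eI NegzE; lia.
Qed.

Lemma Onempty_self (H : bset d) (phi : bspl d) : H phi -> Onempty n m phi 0 H.
Proof.
have phiphi : cellsOf m phi phi by split => // t; rewrite /p_; lia.
by move=> Hphi; exists phi; split => //; exists phi => //; exists phi.
Qed.

Lemma Onempty_le_level (H : bset d) (phi : bspl d) (g : int) :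
  Onempty n m phi (- g) H -> g <= (phi.1)%:Z.
Proof.
case=> psi [_ [I [eI _]]]; rewrite opprK => /cellsK_level.
by rewrite eI; lia.
Qed.

Lemma gap_exists (H : bset d) (phi : bspl d) :
  H phi -> exists g, is_gap n m H phi g.
Proof.
move=> Hphi; have [|g [Og gmax]] := @int_max_exists _ 0 phi.1 _ (@Onempty_le_level H phi).
  by rewrite oppr0; apply: Onempty_self.
by exists g.
Qed.

Hypothesis n_ge2 : (2 <= n)%N.
Hypothesis m_ge2 : (2 <= m)%N.

Lemma cchild_parent_unique (A A' K : cell d) :
  cchild n A K -> cchild n A' K -> A = A'.
Proof.
case: A A' => [a1 a2] [b1 b2] [/= eK1 AK] [/= eK1' A'K].
congr pair; first by move: eK1 eK1'; lia.
apply/ffunP => t; have := AK t; have := A'K t; rewrite /s_.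
move: (a2 t) (b2 t) (K.2 t) => u v w; have := n_ge2; nia.
Qed.

Lemma cdesc_ancestor_unique k (A A' C : cell d) :
  cdesc n k A C -> cdesc n k A' C -> A = A'.
Proof.
elim: k A A' => [|k IHk] A A' /=; first by move=> -> ->.
case=> K AK KC [K' A'K' K'C].
by move: A'K'; rewrite -(IHk _ _ KC K'C); apply: cchild_parent_unique.
Qed.

Lemma floorz_bounds (u : int) :
  (u %/ n%:Z)%Z * n%:Z <= u /\ u < ((u %/ n%:Z)%Z + 1) * n%:Z.
Proof. by split; [apply: lez_floor | apply: ltz_ceil]; lia. Qed.

Lemma bchild_cellsOf (chi psi : bspl d) (J : cell d) :
  bchild n m chi psi -> cellsOf m psi J ->
  exists2 J', cellsOf m chi J' & cchild n J' J.
Proof.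
case=> epsi chi_psi [eJ psi_J].
exists (chi.1, [ffun t => (J.2 t %/ n%:Z)%Z]); split => //=.
- move=> t; rewrite ffunE; have := chi_psi t; have := psi_J t.
  have := floorz_bounds (J.2 t); rewrite /s_ /p_.
  move: (J.2 t) (chi.2 t) (psi.2 t) (J.2 t %/ n%:Z)%Z => u v w q.
  have := n_ge2; have := m_ge2; nia.
- by rewrite eJ epsi.
- move=> t; rewrite ffunE; have := floorz_bounds (J.2 t); rewrite /s_.
  move: (J.2 t) (J.2 t %/ n%:Z)%Z => u q; have := n_ge2; nia.
Qed.

Definition cell_ancestor j (chi psi : bspl d) : Prop :=
  forall J, cellsOf m psi J -> exists2 J', cellsOf m chi J' & cdesc n j J' J.

Lemma cellsK_ancestor (g : int) j (chi psi : bspl d) (I : cell d) :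
  cell_ancestor j chi psi -> cellsK n m g psi I -> cellsK n m (g + j%:Z) chi I.
Proof.
move=> anc; case: g => [a|a] [J psiJ JI]; have [J' chiJ' J'J] := anc J psiJ.
- by rewrite -PoszD; exists J' => //; rewrite addnC; apply: cdesc_trans J'J JI.
- have [le_aj | lt_ja] := leqP a.+1 j.
  + have -> : Negz a + j%:Z = Posz (j - a.+1)%N by rewrite NegzE; lia.
    move: J'J; rewrite -(subnK le_aj) => /cdesc_split [B J'B BJ].
    by exists J' => //; rewrite addnK -(cdesc_ancestor_unique BJ JI).
  + have -> : Negz a + j%:Z = Negz (a - j)%N by rewrite !NegzE; lia.
    move: JI; have -> : a.+1 = ((a - j).+1 + j)%N by lia.
    case/cdesc_split=> B IB BJ.
    by exists J' => //; rewrite -(cdesc_ancestor_unique BJ J'J).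
Qed.

Lemma cell_ancestor_refl (psi : bspl d) : cell_ancestor 0 psi psi.
Proof. by move=> J psiJ; exists J. Qed.

Lemma cell_ancestor_bchild j (chi psi' psi : bspl d) :
  cell_ancestor j chi psi' -> bchild n m psi' psi -> cell_ancestor j.+1 chi psi.
Proof.
move=> anc psi'psi J psiJ; have [J1 psi'J1 J1J] := bchild_cellsOf psi'psi psiJ.
have [J2 chiJ2 J2J1] := anc _ psi'J1.
by exists J2 => //; rewrite -addn1; apply: cdesc_trans J2J1 _; exists J.
Qed.

Lemma hgen_cell_ancestor (L Ls : bset d) :
  (forall phi, Ls phi -> B0 m phi \/ chS n m Ls phi) ->
  forall psi : bspl d, B0 m psi \/ chS n m Ls psi -> ~ L psi ->
  exists j chi, hgen n m L chi /\ cell_ancestor j chi psi.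
Proof.
move=> Ls_closed psi; move: {2}psi.1 (erefl psi.1) => N.
elim: N psi => [|N IHN] psi epsi psi_gen psi_notL.
  case: psi_gen => [psiB0 | [psi' _ [epsi' _]]]; last by rewrite epsi' in epsi.
  by exists 0%N, psi; split; [split; first left | apply: cell_ancestor_refl].
have [psi_genL | psi_notgenL] := classic (B0 m psi \/ chS n m L psi).
  by exists 0%N, psi; split; [split | apply: cell_ancestor_refl].
case: psi_gen => [psiB0 | [psi' Lspsi' psi'psi]]; first by case: psi_notgenL; left.
have psi'_notL : ~ L psi' by move=> Lpsi'; apply: psi_notgenL; right; exists psi'.
have epsi' : psi'.1 = N by case: psi'psi epsi => -> _ [].
have [j [chi [chi_gen anc]]] := IHN _ epsi' (Ls_closed _ Lspsi') psi'_notL.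
by exists j.+1, chi; split => //; apply: cell_ancestor_bchild psi'psi.
Qed.

Lemma Onempty_hgen_sub (L Ls : bset d) (phi : bspl d) (g : int) :
  (forall psi, Ls psi -> B0 m psi \/ chS n m Ls psi) -> (forall psi, L psi -> Ls psi) ->
  Onempty n m phi (- g) (hgen n m Ls) ->
  exists k : int, g <= k /\ Onempty n m phi (- k) (hgen n m L).
Proof.
move=> Ls_closed L_Ls [psi [[psi_gen psi_notLs] [I phiI]]].
rewrite opprK => psiI.
have psi_notL : ~ L psi by move/L_Ls.
have [j [chi [chi_gen anc]]] := hgen_cell_ancestor Ls_closed psi_gen psi_notL.
exists (g + j%:Z); split; first lia.
by exists chi; split => //; exists I; rewrite // opprK; apply: cellsK_ancestor psiI.
Qed.

End Overlaps.

Theorem lemma7p4 (d n m : nat) (hd : (1 <= d)%N) (hn : (2 <= n)%N) (hm : (2 <= m)%N)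
  (L Ls : bset d) (hL : lineage n m L) (hLs : lineage n m Ls)
  (hsub : forall phi, L phi -> Ls phi) :
  (forall phi, hgen n m Ls phi ->
     exists g, is_gap n m (hgen n m Ls) phi g /\
       exists k : int, g <= k /\ Onempty n m phi (- k) (hgen n m L)) /\
  (forall phi, hgen n m Ls phi -> hgen n m L phi ->
     exists gs g, [/\ is_gap n m (hgen n m Ls) phi gs,
                      is_gap n m (hgen n m L) phi g & gs <= g]).
Proof.
split=> [phi Hsphi | phi Hsphi Hphi].
  have [g gap_g] := gap_exists n m Hsphi.
  by exists g; split => //; exact (Onempty_hgen_sub hn hm hLs.2 hsub gap_g.1).
have [gs gap_gs] := gap_exists n m Hsphi.
have [g gap_g] := gap_exists n m Hphi.
have [k [le_gsk Ok]] := Onempty_hgen_sub hn hm hLs.2 hsub gap_gs.1.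
by exists gs, g; split => //; apply: le_trans le_gsk (gap_g.2 _ Ok).
Qed.
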